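(* Let $\mathcal C$ be a small cylinder category. A morphism of $\mathcal C$ is a weak equivalence in $\mathcal C$ if and only if (its Yoneda image) is a weak equivalence in $\widetilde{\mathcal C}$.
   Context: A cylinder category is a category $\mathcal C$ with two classes of morphisms, the cofibrations and the weak equivalences (morphisms in both classes are called trivial cofibrations), such that: (1) both classes contain all isomorphisms and are closed under composition; (2) weak equivalences satisfy 2-out-of-6: if $f,g,h$ are composable and $f\circ g$, $g\circ h$ are weak equivalences then $f,g,h,f\circ g\circ h$ are; (3) $\mathcal C$ has an initial object $0$ and every $0\to X$ is a cofibration; (4) pushouts of cofibrations along arbitrary maps exist and are cofibrations; (5) pushouts of trivial cofibrations are trivial cofibrations; (6) for every object $X$ the codiagonal $X\sqcup X\to X$ factors as a cofibration $X\sqcup X\hookrightarrow IX$ followed by a weak equivalence $IX\to X$; (7) every trivial cofibration admits a retraction. For a cofibration $A\hookrightarrow B$, a relative cylinder object is a factorization $B\sqcup_A B\hookrightarrow I_AB\xrightarrow{\sim}B$ of the codiagonal into a cofibration followed by a weak equivalence. For a small cylinder category $\mathcal C$, $\widetilde{\mathcal C}$ is the category of presheaves of sets on $\mathcal C$ sending the initial object to a singleton and pushouts along cofibrations to pullbacks of sets; $\mathcal C$ is identified with its image under the Yoneda embedding. A morphism $f:X\to Y$ of $\widetilde{\mathcal C}$ is a weak equivalence if for every cofibration $i:A\hookrightarrow B$ of $\mathcal C$ and every commutative square with top $u:A\to X$ and bottom $w:B\to Y$ (so $f\circ u=w\circ i$), there exist $a:B\to X$ with $a\circ i=u$ and $h:I_AB\to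 Y$ for some relative cylinder object such that $h$ restricted along the two inclusions $B\to I_AB$ is $f\circ a$ and $w$. *)

Set Implicit Arguments.
Unset Strict Implicit.

Record Category := {
  Ob :> Type;
  Hom : Ob -> Ob -> Type;
  idm : forall X, Hom X X;
  comp : forall X Y Z, Hom Y Z -> Hom X Y -> Hom X Z;
  comp_id_l : forall X Y (f : Hom X Y), comp (idm Y) f = f;
  comp_id_r : forall X Y (f : Hom X Y), comp f (idm X) = f;
  comp_assoc : forall W X Y Z (h : Hom Y Z) (g : Hom X Y) (f : Hom W X),
      comp h (comp g f) = comp (comp h g) f
}.
Arguments Hom {c} _ _.
Arguments idm {c} X.
Arguments comp {c X Y Z} _ _.
(* [g ∘ f] is "first f, then g" *)
Notation "g ∘ f" := (comp g f) (at level 40, left associativity).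

Section CatDefs.
Variable C : Category.

Definition is_iso {X Y : C} (f : Hom X Y) : Prop :=
  exists g : Hom Y X, g ∘ f = idm X /\ f ∘ g = idm Y.

Definition is_initial (O : C) : Prop :=
  forall Y : C, exists f : Hom O Y, forall g : Hom O Y, g = f.

(* The commutative square  A --i--> B, A --f--> Cc, B --g--> D, Cc --k--> D
   is a pushout square (k is the pushout of i along f). *)
Definition is_pushout {A B Cc D : C} (i : Hom A B) (f : Hom A Cc)
    (g : Hom B D) (k : Hom Cc D) : Prop :=
  g ∘ i = k ∘ f /\
  forall (Z : C) (b : Hom B Z) (c : Hom Cc Z), b ∘ i = c ∘ f ->
    exists d : Hom D Z, (d ∘ g = b /\ d ∘ k = c) /\
      forall d' : Hom D Z, d' ∘ g = b /\ d' ∘ k = c -> d' = d.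
End CatDefs.

Record CylinderStructure (C : Category) := {
  cof : forall (X Y : C), Hom X Y -> Prop;
  weq : forall (X Y : C), Hom X Y -> Prop;
  cof_iso : forall (X Y : C) (f : Hom X Y), is_iso f -> cof f;
  weq_iso : forall (X Y : C) (f : Hom X Y), is_iso f -> weq f;
  cof_comp : forall (X Y Z : C) (f : Hom X Y) (g : Hom Y Z),
      cof f -> cof g -> cof (g ∘ f);
  weq_comp : forall (X Y Z : C) (f : Hom X Y) (g : Hom Y Z),
      weq f -> weq g -> weq (g ∘ f);
  weq_2of6 : forall (W X Y Z : C) (h : Hom W X) (g : Hom X Y) (f : Hom Y Z),
      weq (f ∘ g) -> weq (g ∘ h) ->
      weq f /\ weq g /\ weq h /\ weq (f ∘ g ∘ h);
  init : C;
  init_initial : is_initial init;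
  cof_init : forall (X : C) (e : Hom init X), cof e;
  pushout_exists : forall (A B Cc : C) (i : Hom A B) (f : Hom A Cc),
      cof i -> exists (D : C) (g : Hom B D) (k : Hom Cc D), is_pushout i f g k;
  pushout_cof : forall (A B Cc D : C) (i : Hom A B) (f : Hom A Cc)
      (g : Hom B D) (k : Hom Cc D), cof i -> is_pushout i f g k -> cof k;
  pushout_tcof : forall (A B Cc D : C) (i : Hom A B) (f : Hom A Cc)
      (g : Hom B D) (k : Hom Cc D), cof i -> weq i -> is_pushout i f g k ->
      cof k /\ weq k;
  (* (6) cylinders: for any coproduct X ⊔ X (pushout over the initial object)
     the codiagonal factors as a cofibration followed by a weak equivalence *)
  cylinder : forall (X : C) (e : Hom init X) (P : C) (j1 j2 : Hom X P),
      is_pushout e e j1 j2 ->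
      exists (I : C) (c : Hom P I) (p : Hom I X),
        cof c /\ weq p /\ p ∘ c ∘ j1 = idm X /\ p ∘ c ∘ j2 = idm X;
  tcof_retraction : forall (X Y : C) (i : Hom X Y), cof i -> weq i ->
      exists r : Hom Y X, r ∘ i = idm X
}.
Arguments cof {C} c {X Y} _.
Arguments weq {C} c {X Y} _.
Arguments init {C} c.

(* Relative cylinder object for a cofibration i : A -> B:
   B ⊔_A B (a pushout (P, j1, j2) of i along i) --c--> I --p--> B,
   c a cofibration, p a weak equivalence, p ∘ c the codiagonal.
   The two inclusions B -> I are c ∘ j1 and c ∘ j2. *)
Definition is_rel_cylinder {C : Category} (S : CylinderStructure C)
    {A B P I : C} (i : Hom A B) (j1 j2 : Hom B P) (c : Hom P I) (p : Hom I B)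
    : Prop :=
  is_pushout i i j1 j2 /\ cof S c /\ weq S p /\
  p ∘ c ∘ j1 = idm B /\ p ∘ c ∘ j2 = idm B.

Record Presheaf (C : Category) := {
  pob : C -> Type;
  pmap : forall (X Y : C), Hom X Y -> pob Y -> pob X;
  pmap_id : forall (X : C) (x : pob X), pmap (idm X) x = x;
  pmap_comp : forall (X Y Z : C) (f : Hom X Y) (g : Hom Y Z) (x : pob Z),
      pmap (g ∘ f) x = pmap f (pmap g x)
}.
Arguments pob {C} _ _.
Arguments pmap {C} _ {X Y} _ _.

Record NatTrans {C : Category} (P Q : Presheaf C) := {
  ntc : forall {X : C}, pob P X -> pob Q X;
  ntnat : forall (X Y : C) (f : Hom X Y) (x : pob P Y),
      ntc (pmap P f x) = pmap Q f (ntc x)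
}.
Arguments ntc {C P Q} _ X _.

Definition nt_comp {C : Category} {P Q R : Presheaf C}
    (b : NatTrans Q R) (a : NatTrans P Q) : NatTrans P R.
Proof.
  refine {| ntc := fun X x => ntc b X (ntc a X x) |}.
  intros X Y f x. rewrite (ntnat a), (ntnat b). reflexivity.
Defined.

Definition nt_eq {C : Category} {P Q : Presheaf C} (a b : NatTrans P Q) : Prop :=
  forall (X : C) (x : pob P X), ntc a X x = ntc b X x.

Definition yoneda {C : Category} (X : C) : Presheaf C.
Proof.
  refine {| pob := fun A => Hom A X; pmap := fun A B f g => g ∘ f |}.
  - intros A g. apply comp_id_r.
  - intros A B D f g h. apply comp_assoc.
Defined.

Definition ymap {C : Category} {X Y : C} (f : Hom X Y) :
    NatTrans (yoneda X) (yoneda Y).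
Proof.
  refine {| ntc := fun A (g : pob (yoneda X) A) => (f ∘ g : pob (yoneda Y) A) |}.
  intros A B h g. simpl. apply comp_assoc.
Defined.

(* Objects of C~: presheaves sending the initial object to a singleton and
   pushouts along cofibrations to pullbacks of sets; morphisms are all
   natural transformations (full subcategory). *)
Definition in_Ctilde {C : Category} (S : CylinderStructure C) (P : Presheaf C)
    : Prop :=
  (exists x : pob P (init S), forall y, y = x) /\
  forall (A B Cc D : C) (i : Hom A B) (f : Hom A Cc) (g : Hom B D) (k : Hom Cc D),
    cof S i -> is_pushout i f g k ->
    forall (b : pob P B) (c : pob P Cc), pmap P i b = pmap P f c ->
      exists d : pob P D, (pmap P g d = b /\ pmap P k d = c) /\
        forall d', pmap P g d' = b /\ pmap P k d' = c -> d' = d.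

(* Weak equivalences of C~ (maps out of representables y A are the
   natural transformations y A => P). *)
Definition ctilde_weq {C : Category} (S : CylinderStructure C)
    {P Q : Presheaf C} (alpha : NatTrans P Q) : Prop :=
  forall (A B : C) (i : Hom A B), cof S i ->
  forall (u : NatTrans (yoneda A) P) (w : NatTrans (yoneda B) Q),
    nt_eq (nt_comp alpha u) (nt_comp w (ymap i)) ->
    exists a : NatTrans (yoneda B) P,
      nt_eq (nt_comp a (ymap i)) u /\
      exists (Pb I : C) (j1 j2 : Hom B Pb) (c : Hom Pb I) (p : Hom I B)
             (h : NatTrans (yoneda I) Q),
        is_rel_cylinder S i j1 j2 c p /\
        nt_eq (nt_comp h (ymap (c ∘ j1))) (nt_comp alpha a) /\
        nt_eq (nt_comp h (ymap (c ∘ j2))) w.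

Lemma yoneda_in_Ctilde {C : Category} (S : CylinderStructure C) (X : C) :
  in_Ctilde S (yoneda X).
Proof.
  split.
  - destruct (init_initial S X) as [e He]. exists e. exact He.
  - intros A B Cc D i f g k _ [Hsq HU] b c Hbc. simpl in *.
    destruct (HU X b c Hbc) as [d [Hd Hu]]. exists d. split; auto.
Qed.

(* A weak equivalence f of C has the right lifting property up to homotopy
   against cofibrations: push a square from i : A -> B to f out along i,
   factor the induced map out of the pushout as a cofibration followed by a
   weak equivalence, and retract the resulting trivial cofibration
   t : X -> M; the retraction is homotopic to the identity relative to X,
   which yields the homotopy. Conversely, if f has this property, factor
   f = q t and lift against t: the lift a is a retraction of t and f a is
   homotopic to the weak equivalence q, so 2-out-of-6 applied to t, a, f
   shows that f is a weak equivalence. By the Yoneda lemma, lifting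
   problems between representables in C~ are exactly those in C. *)

Ltac reassoc := repeat rewrite <- comp_assoc.

Section Pushouts.
Context {C : Category}.

Lemma comp_eq_pre {X Y Y' Z W : C} {a : Hom Y Z} {b : Hom X Y}
    {c : Hom Y' Z} {d : Hom X Y'} (x : Hom W X) :
  a ∘ b = c ∘ d -> a ∘ (b ∘ x) = c ∘ (d ∘ x).
Proof. intros E. rewrite !comp_assoc, E. reflexivity. Qed.

Lemma pushout_hom_ext {A B Cc D Z : C} {i : Hom A B} {f : Hom A Cc}
    {g : Hom B D} {k : Hom Cc D} (d1 d2 : Hom D Z) :
  is_pushout i f g k -> d1 ∘ g = d2 ∘ g -> d1 ∘ k = d2 ∘ k -> d1 = d2.
Proof.
  intros [Hsq HU] E1 E2.
  destruct (HU Z (d2 ∘ g) (d2 ∘ k)) as [d [_ Hd]].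
  { reassoc. rewrite Hsq. reflexivity. }
  rewrite (Hd d1), (Hd d2); auto.
Qed.

Lemma pushout_factor {A B Cc D Z : C} {i : Hom A B} {f : Hom A Cc}
    {g : Hom B D} {k : Hom Cc D} (b : Hom B Z) (c : Hom Cc Z) :
  is_pushout i f g k -> b ∘ i = c ∘ f ->
  exists d : Hom D Z, d ∘ g = b /\ d ∘ k = c.
Proof. intros [_ HU] E. destruct (HU Z b c E) as [d [Hd _]]. exists d. exact Hd. Qed.

Lemma is_pushout_sym {A B Cc D : C} {i : Hom A B} {f : Hom A Cc}
    {g : Hom B D} {k : Hom Cc D} :
  is_pushout i f g k -> is_pushout f i k g.
Proof.
  intros [Hsq HU]. split; [symmetry; exact Hsq|].
  intros Z b c E. destruct (HU Z c b (eq_sym E)) as [d [[H1 H2] Hd]].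
  exists d. split; [auto|]. intros d' [E1 E2]. apply Hd; auto.
Qed.

Lemma is_pushout_paste {A B B' Cc D D' : C} {i : Hom A B} {f : Hom A Cc}
    {g : Hom B D} {k : Hom Cc D} {i' : Hom B B'} {g' : Hom B' D'}
    {k' : Hom D D'} :
  is_pushout i f g k -> is_pushout i' g g' k' ->
  is_pushout (i' ∘ i) f g' (k' ∘ k).
Proof.
  intros HL HR. pose proof (proj1 HL) as HLsq. pose proof (proj1 HR) as HRsq.
  split.
  { rewrite comp_assoc, HRsq. reassoc. rewrite HLsq. reflexivity. }
  intros Z b c E. rewrite comp_assoc in E.
  destruct (pushout_factor (b ∘ i') c HL E) as [d0 [Hd0g Hd0k]].
  destruct (pushout_factor b d0 HR (eq_sym Hd0g)) as [d [Hdg Hdk]].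
  exists d. split.
  { split; [exact Hdg|]. rewrite comp_assoc, Hdk. exact Hd0k. }
  intros d' [Hd'g Hd'k]. apply (pushout_hom_ext d' d HR).
  - congruence.
  - apply (pushout_hom_ext _ _ HL).
    + rewrite <- comp_assoc, <- HRsq, comp_assoc, Hd'g, Hdk. congruence.
    + rewrite <- comp_assoc, Hd'k, Hdk. congruence.
Qed.

Lemma is_pushout_retraction {X M P : C} {t : Hom X M} {r : Hom M X}
    {j1 j2 : Hom M P} {s : Hom P M} :
  is_pushout t t j1 j2 -> r ∘ t = idm X ->
  s ∘ j1 = t ∘ r -> s ∘ j2 = idm M -> is_pushout j1 r s t.
Proof.
  intros HP Hrt Hs1 Hs2. pose proof (proj1 HP) as HPsq.
  split; [exact Hs1|]. intros Z b x Hbx.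
  exists (b ∘ j2). split.
  - split.
    + apply (pushout_hom_ext _ _ HP).
      * reassoc. rewrite Hs1, (comp_assoc j2 t r), <- HPsq.
        rewrite (comp_assoc b (j1 ∘ t) r), (comp_assoc b j1 t), Hbx.
        reassoc. rewrite (comp_assoc r t r), Hrt, comp_id_l. reflexivity.
      * reassoc. rewrite Hs2, comp_id_r. reflexivity.
    + reassoc. rewrite <- HPsq, comp_assoc, Hbx, <- comp_assoc, Hrt.
      apply comp_id_r.
  - intros d' [Hd's _]. rewrite <- Hd's, <- comp_assoc, Hs2, comp_id_r. reflexivity.
Qed.

(* Pushing the second summand of U ⊔ U forward along φ : U -> V
   gives U ⊔ V. *)
Lemma is_pushout_coproduct {O U V PU Q : C} {eU : Hom O U} {eV : Hom O V}
    {J1 J2 : Hom U PU} {iU : Hom U Q} {iV : Hom V Q} {φ : Hom U V}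
    {Φ : Hom PU Q} :
  is_initial O -> is_pushout eU eU J1 J2 -> is_pushout eU eV iU iV ->
  Φ ∘ J1 = iU -> Φ ∘ J2 = iV ∘ φ -> is_pushout J2 φ Φ iV.
Proof.
  intros HO HPU HQ HΦ1 HΦ2. split; [exact HΦ2|]. intros Z b x Hbx.
  destruct (pushout_factor (b ∘ J1) x HQ) as [d [Hd1 Hd2]].
  { destruct (HO Z) as [e He].
    rewrite (He (b ∘ J1 ∘ eU)), (He (x ∘ eV)). reflexivity. }
  exists d. split.
  - split; [|exact Hd2]. apply (pushout_hom_ext _ _ HPU).
    + reassoc. rewrite HΦ1. exact Hd1.
    + reassoc. rewrite HΦ2, comp_assoc, Hd2. symmetry. exact Hbx.
  - intros d' [Hd'Φ Hd'V]. apply (pushout_hom_ext _ _ HQ).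
    + rewrite <- HΦ1, (comp_assoc d' Φ J1), Hd'Φ, HΦ1. symmetry. exact Hd1.
    + congruence.
Qed.

End Pushouts.

Section CylinderCategory.
Context {C : Category} (S : CylinderStructure C).

Lemma init_hom_uniq {Y : C} (a b : Hom (init S) Y) : a = b.
Proof. destruct (init_initial S Y) as [e He]. rewrite (He a), (He b). reflexivity. Qed.

Lemma weq_id (X : C) : weq S (idm X).
Proof. apply weq_iso. exists (idm X). split; apply comp_id_l. Qed.

Lemma weq_right_of_comp {X Y Z : C} (h : Hom X Y) (g : Hom Y Z) :
  weq S (g ∘ h) -> weq S g -> weq S h.
Proof.
  intros Hgh Hg.
  apply (weq_2of6 (c:=S) (h:=h) (g:=g) (f:=idm Z)); [rewrite comp_id_l|]; assumption.
Qed.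

Lemma weq_left_of_comp {X Y Z : C} (h : Hom X Y) (g : Hom Y Z) :
  weq S (g ∘ h) -> weq S h -> weq S g.
Proof.
  intros Hgh Hh.
  apply (weq_2of6 (c:=S) (h:=idm X) (g:=h) (f:=g)); [|rewrite comp_id_r]; assumption.
Qed.

Lemma weq_section {X Y : C} (s : Hom X Y) (p : Hom Y X) :
  p ∘ s = idm X -> weq S p -> weq S s.
Proof. intros E Hp. apply (weq_right_of_comp s p); [rewrite E; apply weq_id|exact Hp]. Qed.

Lemma cof_pushout_second {A B Cc D : C} {i : Hom A B} {f : Hom A Cc}
    {g : Hom B D} {k : Hom Cc D} :
  cof S f -> is_pushout i f g k -> cof S g.
Proof. intros Hf HP. exact (pushout_cof Hf (is_pushout_sym HP)). Qed.

(* The mapping cylinder: U -> (IU ⊔_{U ⊔ U} (U ⊔ V)) -> V, where the second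
   map is a weak equivalence because V includes by a pushout of the trivial
   cofibration U -> IU. *)
Lemma factor_cof_weq {U V : C} (φ : Hom U V) :
  exists (M : C) (k : Hom U M) (q : Hom M V), cof S k /\ weq S q /\ q ∘ k = φ.
Proof.
  destruct (init_initial S U) as [eU _]. destruct (init_initial S V) as [eV _].
  destruct (pushout_exists eV (cof_init eU)) as [Q [iU [iV HQ]]].
  destruct (pushout_exists eU (cof_init eU)) as [PU [J1 [J2 HPU]]].
  destruct (cylinder HPU) as [IU [cU [pU [HcU [HpU [HJ1 HJ2]]]]]].
  destruct (pushout_factor iU (iV ∘ φ) HPU) as [Φ [HΦ1 HΦ2]];
    [apply init_hom_uniq|].
  destruct (pushout_exists Φ HcU) as [M [g [k HM]]].
  destruct (pushout_factor φ (idm V) HQ) as [r0 [Hr1 Hr2]];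
    [apply init_hom_uniq|].
  destruct (pushout_factor (φ ∘ pU) r0 HM) as [q [_ Hqk]].
  { apply (pushout_hom_ext _ _ HPU); reassoc.
    - rewrite HΦ1, Hr1, (comp_assoc pU cU J1), HJ1. apply comp_id_r.
    - rewrite HΦ2, (comp_assoc r0 iV φ), Hr2, (comp_assoc pU cU J2), HJ2.
      rewrite comp_id_l. apply comp_id_r. }
  exists M, (k ∘ iU), q. repeat split.
  - apply cof_comp; [exact (cof_pushout_second (cof_init eV) HQ)|].
    exact (pushout_cof HcU HM).
  - assert (HkV : weq S (k ∘ iV)).
    { assert (Hc : cof S (cU ∘ J2))
        by exact (cof_comp (pushout_cof (cof_init eU) HPU) HcU).
      assert (Hw : weq S (cU ∘ J2))
        by (apply (weq_section _ pU); [rewrite comp_assoc; exact HJ2|exact HpU]).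
      exact (proj2 (pushout_tcof Hc Hw (is_pushout_paste
        (is_pushout_coproduct (init_initial S) HPU HQ HΦ1 HΦ2) HM))). }
    apply (weq_left_of_comp (k ∘ iV)); [|exact HkV].
    rewrite comp_assoc, Hqk, Hr2. apply weq_id.
  - rewrite comp_assoc, Hqk. exact Hr1.
Qed.

Lemma rel_cylinder_exists {A B : C} (i : Hom A B) :
  cof S i -> exists (P I : C) (j1 j2 : Hom B P) (c : Hom P I) (p : Hom I B),
    is_rel_cylinder S i j1 j2 c p.
Proof.
  intros Hi. destruct (pushout_exists i Hi) as [P [j1 [j2 HP]]].
  destruct (pushout_factor (idm B) (idm B) HP eq_refl) as [n [Hn1 Hn2]].
  destruct (factor_cof_weq n) as [I [c [p [Hc [Hp Hpc]]]]].
  exists P, I, j1, j2, c, p.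
  split; [exact HP|]. split; [exact Hc|]. split; [exact Hp|].
  rewrite Hpc. split; assumption.
Qed.

Lemma rel_cylinder_incl_tcof {A B P I : C} {i : Hom A B} {j1 j2 : Hom B P}
    {c : Hom P I} {p : Hom I B} :
  cof S i -> is_rel_cylinder S i j1 j2 c p ->
  cof S (c ∘ j1) /\ weq S (c ∘ j1).
Proof.
  intros Hi [HP [Hc [Hp [E1 _]]]]. split.
  - apply cof_comp; [exact (cof_pushout_second Hi HP)|exact Hc].
  - apply (weq_section _ p); [rewrite comp_assoc; exact E1|exact Hp].
Qed.

(* Push c out along the map σ = (t r, 1) out of M ⊔_X M: the pushout μ of c
   satisfies that μ t is a pushout of the trivial cofibration c j1, so μ is a
   trivial cofibration and a retraction of μ yields the homotopy. *)
Lemma tcof_retraction_homotopic {X M P I : C} (t : Hom X M) (r : Hom M X)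
    (j1 j2 : Hom M P) (c : Hom P I) (p : Hom I M) :
  cof S t -> weq S t -> r ∘ t = idm X -> is_rel_cylinder S t j1 j2 c p ->
  exists H : Hom I M, H ∘ (c ∘ j1) = t ∘ r /\ H ∘ (c ∘ j2) = idm M.
Proof.
  intros Ht Htw Hrt Hcyl. pose proof Hcyl as [HP [Hc _]].
  destruct (pushout_factor (t ∘ r) (idm M) HP) as [σ [Hσ1 Hσ2]].
  { rewrite <- comp_assoc, Hrt, comp_id_r, comp_id_l. reflexivity. }
  destruct (pushout_exists σ Hc) as [N [ν [μ HN]]].
  assert (Hμt : weq S (μ ∘ t)).
  { destruct (rel_cylinder_incl_tcof Ht Hcyl) as [Hc1 Hw1].
    exact (proj2 (pushout_tcof Hc1 Hw1
      (is_pushout_paste (is_pushout_retraction HP Hrt Hσ1 Hσ2) HN))). }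
  destruct (tcof_retraction (pushout_cof Hc HN) (weq_left_of_comp t μ Hμt Htw))
    as [ρ Hρ].
  exists (ρ ∘ ν). split; reassoc; rewrite (comp_eq_pre _ (proj1 HN)),
    (comp_assoc ρ μ), Hρ, comp_id_l; assumption.
Qed.

Lemma rel_cylinder_map {A B X M PB IB : C} (i : Hom A B) (t : Hom X M)
    (u : Hom A X) (v : Hom B M) (j1 j2 : Hom B PB) (cB : Hom PB IB)
    (pB : Hom IB B) :
  cof S t -> v ∘ i = t ∘ u -> is_rel_cylinder S i j1 j2 cB pB ->
  exists (Pt It : C) (k1 k2 : Hom M Pt) (ct : Hom Pt It) (pt : Hom It M)
         (λ : Hom IB It),
    is_rel_cylinder S t k1 k2 ct pt /\
    λ ∘ (cB ∘ j1) = ct ∘ (k1 ∘ v) /\ λ ∘ (cB ∘ j2) = ct ∘ (k2 ∘ v).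
Proof.
  intros Ht Hvi [HPB [HcB [_ [E1 E2]]]].
  destruct (pushout_exists t Ht) as [Pt [k1 [k2 HPt]]].
  destruct (pushout_factor (idm M) (idm M) HPt eq_refl) as [n [Hn1 Hn2]].
  destruct (pushout_factor (k1 ∘ v) (k2 ∘ v) HPB) as [φ [Hφ1 Hφ2]].
  { reassoc. rewrite Hvi. exact (comp_eq_pre u (proj1 HPt)). }
  destruct (pushout_exists φ HcB) as [I' [ι [κ HI']]].
  destruct (pushout_factor (v ∘ pB) n HI') as [g [_ Hg2]].
  { apply (pushout_hom_ext _ _ HPB); reassoc.
    - rewrite (comp_assoc pB cB j1), E1, Hφ1, (comp_assoc n k1 v), Hn1.
      rewrite comp_id_l. apply comp_id_r.
    - rewrite (comp_assoc pB cB j2), E2, Hφ2, (comp_assoc n k2 v), Hn2.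
      rewrite comp_id_l. apply comp_id_r. }
  destruct (factor_cof_weq g) as [It [c' [p' [Hc' [Hp' Hpc']]]]].
  exists Pt, It, k1, k2, (c' ∘ κ), p', (c' ∘ ι). split; [|split].
  - split; [exact HPt|]. split; [exact (cof_comp (pushout_cof HcB HI') Hc')|].
    split; [exact Hp'|].
    rewrite (comp_assoc p' c'), Hpc', Hg2. split; assumption.
  - reassoc. rewrite (comp_eq_pre _ (proj1 HI')), <- Hφ1. reflexivity.
  - reassoc. rewrite (comp_eq_pre _ (proj1 HI')), <- Hφ2. reflexivity.
Qed.

Definition has_htpy_lifting {X Y : C} (f : Hom X Y) : Prop :=
  forall (A B : C) (i : Hom A B), cof S i ->
  forall (u : Hom A X) (w : Hom B Y), w ∘ i = f ∘ u ->
    exists a : Hom B X, a ∘ i = u /\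
      exists (Pb I : C) (j1 j2 : Hom B Pb) (c : Hom Pb I) (p : Hom I B)
             (h : Hom I Y),
        is_rel_cylinder S i j1 j2 c p /\
        h ∘ (c ∘ j1) = f ∘ a /\ h ∘ (c ∘ j2) = w.

Lemma weq_has_htpy_lifting {X Y : C} (f : Hom X Y) :
  weq S f -> has_htpy_lifting f.
Proof.
  intros Hf A B i Hi u w Hsq.
  destruct (pushout_exists u Hi) as [D [β [ιX HD]]].
  destruct (pushout_factor w f HD Hsq) as [ψ [Hψβ HψX]].
  destruct (factor_cof_weq ψ) as [M [k [q [Hk [Hq Hqk]]]]].
  assert (Hqt : q ∘ (k ∘ ιX) = f) by (rewrite comp_assoc, Hqk; exact HψX).
  assert (Ht : cof S (k ∘ ιX)) by exact (cof_comp (pushout_cof Hi HD) Hk).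
  assert (Htw : weq S (k ∘ ιX))
    by (apply (weq_right_of_comp _ q); [rewrite Hqt|]; assumption).
  destruct (tcof_retraction Ht Htw) as [r Hr].
  assert (Hvi : (k ∘ β) ∘ i = (k ∘ ιX) ∘ u)
    by (reassoc; rewrite (proj1 HD); reflexivity).
  exists (r ∘ (k ∘ β)). split.
  { rewrite <- comp_assoc, Hvi, comp_assoc, Hr. apply comp_id_l. }
  destruct (rel_cylinder_exists i Hi) as [PB [IB [j1 [j2 [cB [pB HcylB]]]]]].
  destruct (rel_cylinder_map i (k ∘ ιX) u (k ∘ β) j1 j2 cB pB Ht Hvi HcylB)
    as [Pt [It [k1 [k2 [ct [pt [λ [Hcylt [L1 L2]]]]]]]]].
  destruct (tcof_retraction_homotopic (k ∘ ιX) r k1 k2 ct pt Ht Htw Hr Hcylt)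
    as [H [H1 H2]].
  exists PB, IB, j1, j2, cB, pB, (q ∘ (H ∘ λ)). split; [exact HcylB|]. split.
  - reassoc. rewrite L1, (comp_assoc ct k1), (comp_assoc H (ct ∘ k1)), H1.
    rewrite <- (comp_assoc (k ∘ ιX) r), comp_assoc, Hqt. reflexivity.
  - reassoc. rewrite L2, (comp_assoc ct k2), (comp_assoc H (ct ∘ k2)), H2.
    rewrite comp_id_l, comp_assoc, Hqk. exact Hψβ.
Qed.

Lemma has_htpy_lifting_weq {X Y : C} (f : Hom X Y) :
  has_htpy_lifting f -> weq S f.
Proof.
  intros Hf.
  destruct (factor_cof_weq f) as [M [t [q [Ht [Hq Hqt]]]]].
  destruct (Hf X M t Ht (idm X) q) as [a [Hat [Pb [I [j1 [j2 [c [p [h Hh]]]]]]]]].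
  { rewrite comp_id_r. exact Hqt. }
  destruct Hh as [Hcyl [Eh1 Eh2]]. pose proof Hcyl as [_ [_ [Hp [_ E2]]]].
  assert (Hh : weq S h).
  { apply (weq_left_of_comp (c ∘ j2)); [rewrite Eh2; exact Hq|].
    apply (weq_section _ p); [rewrite comp_assoc; exact E2|exact Hp]. }
  assert (Hfa : weq S (f ∘ a)).
  { rewrite <- Eh1. apply weq_comp; [|exact Hh].
    exact (proj2 (rel_cylinder_incl_tcof Ht Hcyl)). }
  apply (weq_2of6 (c:=S) (h:=t) (g:=a) (f:=f)); [exact Hfa|rewrite Hat; apply weq_id].
Qed.

End CylinderCategory.

Lemma yoneda_nt_elt {C : Category} {A X : C}
    (u : NatTrans (yoneda A) (yoneda X)) (Z : C) (x : Hom Z A) :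
  ntc u Z x = ntc u A (idm A) ∘ x.
Proof. pose proof (ntnat u x (idm A)) as E. simpl in E. rewrite comp_id_l in E. exact E. Qed.

Lemma nt_eq_yoneda {C : Category} {A X : C} (u v : NatTrans (yoneda A) (yoneda X)) :
  ntc u A (idm A) = ntc v A (idm A) -> nt_eq u v.
Proof. intros E Z x. rewrite (yoneda_nt_elt u), (yoneda_nt_elt v), E. reflexivity. Qed.

Lemma ctilde_weq_ymap {C : Category} (S : CylinderStructure C) {X Y : C}
    (f : Hom X Y) :
  ctilde_weq S (ymap f) <-> has_htpy_lifting S f.
Proof.
  split.
  - intros Hf A B i Hi u w Hsq.
    destruct (Hf A B i Hi (ymap u) (ymap w)) as
        [a [Ea [Pb [I [j1 [j2 [c [p [h [Hcyl [Eh1 Eh2]]]]]]]]]]].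
    { apply nt_eq_yoneda. simpl. rewrite !comp_id_r. symmetry. exact Hsq. }
    exists (ntc a B (idm B)). split.
    { pose proof (Ea A (idm A)) as E. simpl in E.
      rewrite yoneda_nt_elt, !comp_id_r in E. exact E. }
    exists Pb, I, j1, j2, c, p, (ntc h I (idm I)). split; [exact Hcyl|].
    pose proof (Eh1 B (idm B)) as E1. simpl in E1.
    pose proof (Eh2 B (idm B)) as E2. simpl in E2.
    rewrite (yoneda_nt_elt h), !comp_id_r in E1.
    rewrite (yoneda_nt_elt h), !comp_id_r in E2.
    split; assumption.
  - intros Hf A B i Hi u w Huw.
    pose proof (Huw A (idm A)) as Hsq. simpl in Hsq.
    rewrite (yoneda_nt_elt w), comp_id_r in Hsq.
    destruct (Hf A B i Hi _ _ (eq_sym Hsq)) as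
        [a [Ha [Pb [I [j1 [j2 [c [p [h [Hcyl [Eh1 Eh2]]]]]]]]]]].
    exists (ymap a). split.
    { apply nt_eq_yoneda. simpl. rewrite comp_id_r. exact Ha. }
    exists Pb, I, j1, j2, c, p, (ymap h). split; [exact Hcyl|].
    split; apply nt_eq_yoneda; simpl; rewrite !comp_id_r; assumption.
Qed.

Theorem mainTheorem8 (C : Category) (S : CylinderStructure C)
    (X Y : C) (f : Hom X Y) :
  weq S f <-> ctilde_weq S (ymap f).
Proof.
  split; intros Hf.
  - apply ctilde_weq_ymap, weq_has_htpy_lifting, Hf.
  - apply has_htpy_lifting_weq, ctilde_weq_ymap, Hf.
Qed.
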